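(* For every $i$ with $0\le i\le \rho(m)-1$, the sequence $x^{\alpha_i}$ satisfies $x^{\alpha_i}(k)=1$.
   Context: For $u\in\mathbb{R}$ let $\mathbf 1[u]=1$ if $u\ge 0$ and $\mathbf 1[u]=0$ if $u<0$. Let $m$ be a positive integer and let $\rho(m)$ denote the number of primes $p$ with $2m<p<3m$; assume $\rho(m)\ge 2$. List these primes as $p_0>p_1>\dots>p_{\rho(m)-1}$ and put $\alpha_i=3m-p_i$. Let $k=(6m-1)\rho(m)$, $\mu_i=\lfloor k/p_i\rfloor$, $\beta_i=k-p_i\mu_i$. Define weights $\bar a_j$, $1\le j\le k$: if $\rho(m)$ is even, $\bar a_j=2$ if $j=\ell p_i$ for some $i$ and some $\ell$ with $1\le \ell\le 3\rho(m)/2$, $\bar a_j=-2$ if $j=\ell p_i$ with $3\rho(m)/2<\ell\le 2\rho(m)$, and $\bar a_j=0$ otherwise; if $\rho(m)$ is odd, $\bar a_j=2$ if $j=\ell p_i$ with $1\le\ell\le (3\rho(m)-1)/2$, $\bar a_j=-2$ if $j=\ell p_i$ with $(3\rho(m)+1)/2\le \ell\le 2\rho(m)-2$, $\bar a_j=-1$ if $j=\ell p_i$ with $\ell\in\{2\rho(m)-1,2\rho(m)\}$, and $\bar a_j=0$ otherwise (well defined since the sets $\{\ell p_i:1\le\ell\le2\rho(m)\}$ are pairwise disjoint). Let $\bar\theta=2\rho(m)$. For each $i$ define $x^{\alpha_i}(t)$ for $0\le t\le k-1$ by $x^{\alpha_i}(t)=1$ if $t=\beta_i+\ell p_i$ for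 some $0\le \ell\le\mu_i-1$ and $x^{\alpha_i}(t)=0$ otherwise, and for $t\ge k$ by $x^{\alpha_i}(t)=\mathbf 1\big[\sum_{j=1}^k \bar a_j x^{\alpha_i}(t-j)-\bar\theta\big]$. *)

From mathcomp Require Import all_boot all_order all_algebra.
Set Implicit Arguments. Unset Strict Implicit. Unset Printing Implicit Defensive.
Import GRing.Theory Num.Theory.

(* primes p with 2m < p < 3m, listed in decreasing order p_0 > p_1 > ... *)
Definition primes_dec (m : nat) : seq nat :=
  rev [seq p <- iota (2 * m).+1 (m.-1) | prime p].

Definition rho (m : nat) : nat := size (primes_dec m).

Definition pr (m i : nat) : nat := nth 0 (primes_dec m) i.

Definition alpha (m i : nat) : nat := 3 * m - pr m i.

Definition kk (m : nat) : nat := (6 * m - 1) * rho m.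

Definition mu (m i : nat) : nat := kk m %/ pr m i.

Definition beta (m i : nat) : nat := kk m - pr m i * mu m i.

(* weight attached to j = l * p_i, 1 <= l <= 2 rho *)
Definition wt (r l : nat) : int :=
  if ~~ odd r then
    (if l <= (3 * r)./2 then Posz 2 else Negz 1)
  else
    (if l <= (3 * r - 1)./2 then Posz 2
     else if l <= 2 * r - 2 then Negz 1 else Negz 0).

Definition abar (m j : nat) : int :=
  let ps := primes_dec m in
  let P := fun p => (p %| j) && (1 <= j %/ p <= 2 * rho m) in
  let i := find P ps in
  if i < size ps then wt (rho m) (j %/ nth 0 ps i) else Posz 0.

Definition theta (m : nat) : int := Posz (2 * rho m).

(* initial segment of x^{alpha_i} on 0 <= t <= k-1 *)
Definition xinit (m i t : nat) : nat :=
  if [exists l : 'I_(mu m i), t == beta m i + l * pr m i] then 1 else 0.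

(* value at time t given the list prev = [x(0); ...; x(t-1)] *)
Definition xstep (m i t : nat) (prev : seq nat) : nat :=
  if t < kk m then xinit m i t
  else if (theta m <= \sum_(1 <= j < (kk m).+1) abar m j * Posz (nth 0 prev (t - j)))%R
       then 1 else 0.

Fixpoint xlist (m i n : nat) : seq nat :=
  match n with
  | 0 => [::]
  | n'.+1 => let prev := xlist m i n' in rcons prev (xstep m i n' prev)
  end.

Definition xseq (m i t : nat) : nat := nth 0 (xlist m i t.+1) t.

From mathcomp Require Import all_boot all_order all_algebra.
From mathcomp Require Import zify.
Set Implicit Arguments. Unset Strict Implicit. Unset Printing Implicit Defensive.
Import GRing.Theory.

(* Fix a prime p = p_i of (2m, 3m) and write k = mu p + beta.
   The first step of the recursion, at time k, reads the initial segment: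
   x(k - j) = 1 for 1 <= j <= k exactly when p divides j, since
   k - l' p = beta + (mu - l') p.  Because the sets {l q : 1 <= l <= 2 rho}
   for distinct primes q in (2m, 3m) are disjoint, the weight at j = l p is
   wt rho l when l <= 2 rho and 0 otherwise.  Hence the sum feeding the
   threshold is  sum_{1 <= l <= mu} [l <= 2 rho] wt rho l, and since
   mu >= 2 rho this is sum_{l = 1}^{2 rho} wt rho l = 2 rho = theta, so the
   threshold unit fires. *)

Lemma size_xlist m i n : size (xlist m i n) = n.
Proof. by elim: n => //= n IH; rewrite size_rcons IH. Qed.

Lemma nth_xlist m i n t :
  t < n -> nth 0 (xlist m i n) t = xstep m i t (xlist m i t).
Proof.
elim: n => // n IH lt_tn; rewrite /= nth_rcons size_xlist.
case: ltnP => [lt_tn' | le_nt]; first exact: IH.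
have -> : t = n by lia.
by rewrite eqxx.
Qed.

Lemma nth_xlist_init m i n t :
  t < n -> t < kk m -> nth 0 (xlist m i n) t = xinit m i t.
Proof. by move=> lt_tn lt_tk; rewrite nth_xlist // /xstep lt_tk. Qed.

Lemma mem_primes_dec m q :
  q \in primes_dec m -> prime q /\ 2 * m < q < 3 * m.
Proof.
rewrite /primes_dec mem_rev mem_filter mem_iota => /andP [pr_q hq].
by split => //; lia.
Qed.

Lemma pr_bounds m i : i < rho m -> prime (pr m i) /\ 2 * m < pr m i < 3 * m.
Proof. by move=> lt_i; exact: mem_primes_dec (mem_nth 0 lt_i). Qed.

(* The interval (2m, 3m) contains only m - 1 integers; this bound is what
   makes the multipliers j / q <= 2 rho smaller than the primes. *)
Lemma rho_le m : rho m <= m.-1.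
Proof.
rewrite /rho /primes_dec size_rev size_filter.
by rewrite (leq_trans (count_size _ _)) // size_iota.
Qed.

(* Disjointness of the multiple sets: if two listed primes divide j and
   j / q <= 2 rho, then they coincide (otherwise p | j / q < 2m < p). *)
Lemma primes_dec_multiple_uniq m p q j :
  p \in primes_dec m -> q \in primes_dec m ->
  p %| j -> q %| j -> 0 < j %/ q <= 2 * rho m -> q = p.
Proof.
move=> p_in q_in p_j q_j hjq.
have [pr_p hp] := mem_primes_dec p_in; have [pr_q hq] := mem_primes_dec q_in.
have hr := rho_le m.
case: (eqVneq q p) => // neq_qp.
have cop : coprime p q by rewrite prime_coprime // dvdn_prime2 // eq_sym.
have : p %| q * (j %/ q) by rewrite mulnC divnK.
rewrite Gauss_dvdr // => /dvdn_leq; lia.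
Qed.

Definition wt_trunc (r l : nat) : int := if l <= 2 * r then wt r l else 0.

Lemma abar_multiple m p j :
  p \in primes_dec m -> p %| j -> 0 < j -> abar m j = wt_trunc (rho m) (j %/ p).
Proof.
move=> p_in p_j j_gt0; rewrite /abar /wt_trunc /=.
set P := fun q => (q %| j) && (1 <= j %/ q <= 2 * rho m).
have [pr_p _] := mem_primes_dec p_in.
have jp_gt0 : 0 < j %/ p by rewrite divn_gt0 ?prime_gt0 // dvdn_leq.
have found q : q \in primes_dec m -> P q -> q = p.
  by move=> q_in /andP [q_j hjq]; exact: primes_dec_multiple_uniq q_j hjq.
case: ifP => [lt_find | /negbT]; last first.
  rewrite -has_find => /hasPn /(_ p p_in); rewrite /P p_j jp_gt0 /=.
  by move/negbTE ->.
have has_P : has P (primes_dec m) by rewrite has_find.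
have := nth_find 0 has_P; have := mem_nth 0 lt_find.
set q := nth 0 _ _ => q_in P_q.
by move: (P_q); rewrite (found q q_in P_q) => /and3P [_ _ ->].
Qed.

Lemma xinit_from_top m i j :
  0 < pr m i -> 0 < j <= kk m -> xinit m i (kk m - j) = (pr m i %| j).
Proof.
set p := pr m i; move=> p_gt0 /andP [j_gt0 le_jk].
have kdef : kk m = mu m i * p + beta m i.
  by rewrite /beta /mu -/p; have := divn_eq (kk m) p; lia.
rewrite /xinit -/p; case: (boolP (p %| j)) => p_j.
  rewrite ifT //; apply/existsP.
  have le_mu : j %/ p <= mu m i by rewrite /mu -/p leq_divRL // divnK.
  have jp_gt0 : 0 < j %/ p by rewrite divn_gt0 // dvdn_leq.
  have lt_l : mu m i - j %/ p < mu m i by lia.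
  exists (Ordinal lt_l); apply/eqP => /=.
  by rewrite mulnBl divnK //; move: (leq_mul le_mu (leqnn p)); rewrite divnK //; lia.
rewrite ifF //; apply/negbTE/negP => /existsP [[l lt_l] /= /eqP e].
move/negP: p_j; apply; apply/dvdnP; exists (mu m i - l).
by rewrite mulnBl; move: (leq_mul (ltnW lt_l) (leqnn p)) => h; lia.
Qed.

(* The prime p_i is at most 3m - 1, so k = (6m - 1) rho >= 2 rho p_i. *)
Lemma two_rho_le_mu m i : i < rho m -> 2 * rho m <= mu m i.
Proof.
move=> lt_i; have [pr_p hp] := pr_bounds lt_i.
rewrite /mu leq_divRL ?prime_gt0 // /kk.
have : pr m i <= 3 * m - 1 by lia.
by move/(leq_mul (leqnn (2 * rho m))); lia.
Qed.

Lemma sum_multiples (G : nat -> int) p N : 0 < p ->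
  (\sum_(1 <= j < N.+1) (if (p %| j)%N then G (j %/ p)%N else 0)
   = \sum_(1 <= l < (N %/ p)%N.+1) G l)%R.
Proof.
move=> p_gt0; elim: N => [|N IH]; first by rewrite div0n !big_geq.
rewrite big_nat_recr //= IH divnS //.
by case: (p %| N.+1); rewrite ?add0n ?addr0 // add1n [RHS]big_nat_recr.
Qed.

(* The weights wt r 1, ..., wt r (2r) add up to 2r = theta; this is where
   rho >= 2 is needed (for r = 1 the sum is 1). *)
Lemma wt_sum r : 2 <= r -> (\sum_(1 <= l < (2 * r).+1) wt r l = Posz (2 * r))%R.
Proof.
move=> hr; case: (boolP (odd r)) => odd_r.
  rewrite (big_cat_nat _ (n := ((3 * r - 1)./2).+1)) /=; [|lia|lia].
  rewrite (eq_big_nat _ _ (F2 := fun=> Posz 2)); last first.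
    by move=> l hl; rewrite /wt odd_r /= ifT //; lia.
  rewrite [X in (_ + X)%R](big_cat_nat _ (n := (2 * r - 2).+1)) /=; [|lia|lia].
  rewrite [X in (_ + (X + _))%R](eq_big_nat _ _ (F2 := fun=> Negz 1)); last first.
    by move=> l hl; rewrite /wt odd_r /= ifF ?ifT //; lia.
  rewrite [X in (_ + (_ + X))%R](eq_big_nat _ _ (F2 := fun=> Negz 0)); last first.
    by move=> l hl; rewrite /wt odd_r /= ifF ?ifF //; lia.
  by rewrite !sumr_const_nat; lia.
rewrite (big_cat_nat _ (n := ((3 * r)./2).+1)) /=; [|lia|lia].
rewrite (eq_big_nat _ _ (F2 := fun=> Posz 2)); last first.
  by move=> l hl; rewrite /wt (negbTE odd_r) /= ifT //; lia.
rewrite [X in (_ + X)%R](eq_big_nat _ _ (F2 := fun=> Negz 1)); last first.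
  by move=> l hl; rewrite /wt (negbTE odd_r) /= ifF //; lia.
by rewrite !sumr_const_nat; lia.
Qed.

Lemma wt_trunc_sum r n : 2 <= r -> 2 * r <= n ->
  (\sum_(1 <= l < n.+1) wt_trunc r l = Posz (2 * r))%R.
Proof.
move=> hr le_n; rewrite /wt_trunc (big_cat_nat _ (n := (2 * r).+1)) //=.
rewrite [X in (_ + X)%R]big1_seq => [|l]; last first.
  by move=> /andP [_]; rewrite mem_index_iota => /andP [h _]; rewrite ifF //; lia.
rewrite addr0 -(wt_sum hr); apply: eq_big_nat => l /andP [_ h].
by rewrite ifT //; lia.
Qed.

Theorem lemma5 (m : nat) (hm : 0 < m) (hrho : 2 <= rho m) :
  forall i, i < rho m -> xseq m i (kk m) = 1.
Proof.
move=> i lt_i.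
rewrite /xseq nth_xlist // /xstep ltnn.
set p := pr m i; set r := rho m.
have p_in : p \in primes_dec m by apply: mem_nth.
have p_gt0 : 0 < p by have [pr_p _] := pr_bounds lt_i; exact: prime_gt0.
have reduce : (\sum_(1 <= j < (kk m).+1)
                 abar m j * Posz (nth 0 (xlist m i (kk m)) (kk m - j))
               = \sum_(1 <= j < (kk m).+1)
                 (if (p %| j)%N then wt_trunc r (j %/ p)%N else 0))%R.
  apply: eq_big_nat => j /andP [j_gt0 le_jk].
  rewrite nth_xlist_init; [|lia|lia].
  rewrite xinit_from_top ?j_gt0 // -/p.
  case: ifP => [p_j | _]; last by rewrite mulr0.
  by rewrite mulr1 (abar_multiple p_in p_j j_gt0).
rewrite reduce sum_multiples // wt_trunc_sum ?two_rho_le_mu //.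
by rewrite Order.POrderTheory.lexx.
Qed.
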